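(* Let $\mathbf k=(k_1,\ldots,k_r)\in\mathbb N^r$, $\mathbf x=(x_1,\ldots,x_r)$ with $|x_j|\le1$, $l\in\mathbb N_0$ and $n\in\mathbb N$. Then \[ \sum_{n\ge n_1\ge n_2\ge\cdots\ge n_r>0}\prod_{j=1}^r\frac{x_j^{n_j+l}}{(n_j+l)^{k_j}}=(-1)^r\sum_{j=0}^r(-1)^j\,\zeta^\star_{n+l}(k_1,\ldots,k_j;x_1,\ldots,x_j)\,\zeta_l(k_r,k_{r-1},\ldots,k_{j+1};x_r,x_{r-1},\ldots,x_{j+1}). \]
   Context: $\zeta_n(\mathbf k;\mathbf x)=\sum_{n\ge n_1>\cdots>n_r\ge1}\prod_i x_i^{n_i}/n_i^{k_i}$ and $\zeta^\star_n(\mathbf k;\mathbf x)=\sum_{n\ge n_1\ge\cdots\ge n_r\ge1}\prod_i x_i^{n_i}/n_i^{k_i}$ for $n\in\mathbb N_0$; both equal $1$ for the empty index, and a sum over an empty range is $0$. *)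

(* Scalars x_j live in an arbitrary numClosedFieldType C
   (e.g. algC, or complex R for R : rcfType), which covers the complex case. *)
From HB Require Import structures.
From mathcomp Require Import all_boot all_order all_algebra.
Set Implicit Arguments. Unset Strict Implicit. Unset Printing Implicit Defensive.
Import Order.TTheory GRing.Theory Num.Theory.
Local Open Scope ring_scope.

(* An index/argument pair list  [:: (k_1,x_1); ...; (k_r,x_r)]. *)

(* zeta_n(k;x) = sum_{n >= n_1 > ... > n_r >= 1} prod x_i^{n_i}/n_i^{k_i} *)
Fixpoint mzeta {C : numFieldType} (n : nat) (s : seq (nat * C)) : C :=
  match s with
  | [::] => 1
  | (k, x) :: s' =>
      \sum_(1 <= m < n.+1) (x ^+ m / (m%:R) ^+ k) * mzeta m.-1 s'
  end.

(* zeta^star_n(k;x) = sum_{n >= n_1 >= ... >= n_r >= 1} prod x_i^{n_i}/n_i^{k_i} *)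
Fixpoint mzetastar {C : numFieldType} (n : nat) (s : seq (nat * C)) : C :=
  match s with
  | [::] => 1
  | (k, x) :: s' =>
      \sum_(1 <= m < n.+1) (x ^+ m / (m%:R) ^+ k) * mzetastar m s'
  end.

Fixpoint shifted_star_sum {C : numFieldType} (l n : nat) (s : seq (nat * C)) : C :=
  match s with
  | [::] => 1
  | (k, x) :: s' =>
      \sum_(1 <= m < n.+1)
        (x ^+ (m + l) / ((m + l)%:R) ^+ k) * shifted_star_sum l m s'
  end.

From HB Require Import structures.
From mathcomp Require Import all_boot all_order all_algebra.
Import Order.TTheory GRing.Theory Num.Theory.
Local Open Scope ring_scope.

(* The identity is purely combinatorial: it holds for arbitrary indices k_j,
   arbitrary arguments x_j in any numeric field and every n.

   Write t_m = x^m / m^k for the term attached to a pair (k, x), and let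
   window L N s be the star sum over N >= n_1 >= ... >= n_r >= L + 1.  Then
   - the shifted star sum is window l (n + l) s (substitute n_j -> n_j + l),
     and zeta^star_N s is window 0 N s;
   - peeling off the innermost variable n_r = m, window L N (s ++ [(k, x)])
     is the sum over L < m <= N of t_m * window (m - 1) N s;
   - the alternating sum of the theorem (with sign (-1)^(r-j)) obeys the same
     recursion, up to the contribution of the range 1 <= m <= L, which is
     exactly what splits zeta^star_N (s ++ [(k,x)]) into the two ranges.
   Induction on s from the right yields window L N s = alternating sum for
   L <= N, and the theorem follows after moving the sign (-1)^r out. *)

Fixpoint window {C : numFieldType} (L N : nat) (s : seq (nat * C)) : C :=
  match s with
  | [::] => 1
  | (k, x) :: s' =>
      \sum_(L.+1 <= m < N.+1) (x ^+ m / (m%:R) ^+ k) * window L m s'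
  end.

Definition alt_sum {C : numFieldType} (L N : nat) (s : seq (nat * C)) : C :=
  \sum_(j < (size s).+1)
     (-1) ^+ (size s - j) * mzetastar N (take j s) * mzeta L (rev (drop j s)).

Lemma sum_triangle (R : nmodType) (a b : nat) (F : nat -> nat -> R) :
  \sum_(a <= i < b) \sum_(a <= j < i.+1) F i j =
  \sum_(a <= j < b) \sum_(j <= i < b) F i j.
Proof.
transitivity (\sum_(a <= i < b) \sum_(a <= j < b | (j < i.+1)%N) F i j).
  apply: eq_big_nat => i /andP[_ hi].
  by rewrite (big_nat_widen _ _ _ _ _ hi).
rewrite (exchange_big_dep_nat predT) //.
apply: eq_big_nat => j /andP[hj _].
by rewrite (@big_nat_widenl _ _ _ j a) //; apply: eq_bigl => i; rewrite ltnS.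
Qed.

Lemma shifted_star_sum_window {C : numFieldType} (s : seq (nat * C)) (l n : nat) :
  shifted_star_sum l n s = window l (n + l) s.
Proof.
elim: s n => [//|[k x] s IH] n /=.
rewrite -(add1n l) big_addn -addSn addnK.
by apply: eq_bigr => m _; rewrite IH.
Qed.

Lemma mzetastar_window {C : numFieldType} (s : seq (nat * C)) (N : nat) :
  mzetastar N s = window 0 N s.
Proof.
elim: s N => [//|[k x] s IH] N /=.
by apply: eq_bigr => m _; rewrite IH.
Qed.

Lemma window_rcons {C : numFieldType} (s : seq (nat * C)) (k : nat) (x : C)
    (L N : nat) :
  window L N (rcons s (k, x)) =
  \sum_(L.+1 <= m < N.+1) (x ^+ m / (m%:R) ^+ k) * window m.-1 N s.
Proof.
elim: s N => [|[k' x'] s IH] N /=.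
  by apply: eq_bigr => m _; rewrite !mulr1.
under eq_bigr do rewrite IH mulr_sumr /=.
rewrite sum_triangle; apply: eq_big_nat => m /andP[hm _].
rewrite prednK ?(leq_trans _ hm) // mulr_sumr /=.
by apply: eq_bigr => i _; rewrite mulrCA.
Qed.

(* The alternating sum satisfies the recursion of window_rcons, except
   that the innermost variable of each zeta_L factor runs over 1..L:
   for j <= r the new pair (k, x) becomes the outermost pair of
   zeta_L(rev (drop j s)), and for j = r + 1 one gets zeta^star_N itself. *)
Lemma alt_sum_rcons {C : numFieldType} (s : seq (nat * C)) (k : nat) (x : C)
    (L N : nat) :
  alt_sum L N (rcons s (k, x)) =
  mzetastar N (rcons s (k, x))
  - \sum_(1 <= m < L.+1) (x ^+ m / (m%:R) ^+ k) * alt_sum m.-1 N s.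
Proof.
rewrite /alt_sum size_rcons big_ord_recr /= subnn expr0 mul1r.
rewrite take_oversize ?size_rcons // drop_oversize ?size_rcons // mulr1 addrC.
congr (_ + _); under [in RHS]eq_bigr do rewrite mulr_sumr /=.
rewrite exchange_big -sumrN; apply: eq_bigr => j _ /=.
have hj : (j <= size s)%N by rewrite -ltnS.
rewrite -cats1 takel_cat // cats1 drop_rcons // rev_rcons /=.
rewrite subSn // exprS mulN1r !mulNr mulr_sumr /=; congr (- _).
by apply: eq_bigr => m _; exact: mulrCA.
Qed.

Lemma window_alt_sum {C : numFieldType} (s : seq (nat * C)) (L N : nat) :
  (L <= N)%N -> window L N s = alt_sum L N s.
Proof.
elim/last_ind: s L => [|s [k x] IH] L hLN.
  by rewrite /alt_sum big_ord1 /= expr0 !mulr1.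
rewrite alt_sum_rcons [in RHS]mzetastar_window !window_rcons.
rewrite [in RHS](big_cat_nat _ (n := L.+1)) ?ltnS //=.
have -> : \sum_(1 <= m < L.+1) (x ^+ m / (m%:R) ^+ k) * alt_sum m.-1 N s =
          \sum_(1 <= m < L.+1) (x ^+ m / (m%:R) ^+ k) * window m.-1 N s.
  apply: eq_big_nat => m /andP[_ hmL]; rewrite ltnS in hmL.
  by rewrite IH //; exact: leq_trans (leq_pred m) (leq_trans hmL hLN).
by rewrite [X in X - _]addrC addrK.
Qed.

Lemma signr_subn (R : pzRingType) (r j : nat) :
  (j <= r)%N -> (-1) ^+ (r - j) = (-1) ^+ r * (-1) ^+ j :> R.
Proof. by move=> hj; rewrite -signr_odd oddB // signr_addb !signr_odd. Qed.

Theorem mainTheorem13 (C : numClosedFieldType) (s : seq (nat * C)) (l n : nat) :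
  all (fun p => (0 < p.1)%N) s ->
  all (fun p => `|p.2| <= 1) s ->
  (0 < n)%N ->
  shifted_star_sum l n s =
  (-1) ^+ size s *
  \sum_(j < (size s).+1)
     (-1) ^+ j * mzetastar (n + l) (take j s) * mzeta l (rev (drop j s)).
Proof.
move=> _ _ _.
rewrite shifted_star_sum_window window_alt_sum ?leq_addl // /alt_sum mulr_sumr.
apply: eq_bigr => j _.
by rewrite (@signr_subn _ (size s) j (ltn_ord j)) !mulrA.
Qed.
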